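(* For every $d\ge 2$, $\dfrac{1}{6d-7}\le p_c^{\operatorname{face}}(d)$.
   Context: A face is a $(d-1)$-dimensional elementary cube in $\mathbb{R}^d$, i.e. a product $I_1\times\cdots\times I_d$ of intervals $[l,l]$ or $[l,l+1]$ ($l\in\mathbb{Z}$) with exactly one degenerate factor. Two faces $Q,Q'$ are adjacent if $Q\cap Q'$ is a $(d-2)$-dimensional elementary cube. In face percolation with parameter $p$, each face is open independently with probability $p$ (product measure $P_p$). $C(Q)$ is the set of open faces connected to $Q$ by chains of successively adjacent open faces, $|C(Q)|$ its cardinality, $Q_0=[0,0]\times[0,1]^{d-1}$, $\theta^{\operatorname{face}}(p)=P_p(|C(Q_0)|=\infty)$, and $p_c^{\operatorname{face}}(d)=\inf\{p:\theta^{\operatorname{face}}(p)>0\}$. *)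

From HB Require Import structures.
From mathcomp Require Import all_boot all_order all_algebra.
From mathcomp Require Import all_classical all_reals all_analysis.
Set Implicit Arguments. Unset Strict Implicit. Unset Printing Implicit Defensive.
Import Order.TTheory GRing.Theory Num.Theory.
Local Open Scope classical_set_scope.
Local Open Scope ring_scope.

(* The elementary cube  I_1 x ... x I_d  with I_j = [l j, l j + b j]
   (b j = true: nondegenerate interval [l,l+1]; false: degenerate [l,l]). *)
Definition cube_set (R : realType) (d : nat) (l : 'I_d -> int) (b : 'I_d -> bool)
  : set ('I_d -> R) :=
  [set x | forall j, (l j)%:~R <= x j <= (l j + (b j : nat)%:Z)%:~R].

Definition is_elem_cube (R : realType) (d k : nat) (A : set ('I_d -> R)) : Prop :=
  exists (l : 'I_d -> int) (b : 'I_d -> bool),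
    #|[pred j | b j]| = k /\ A = @cube_set R d l b.

(* A face ((d-1)-dim elementary cube) is encoded by (v, i): the cube with
   degenerate factor [v i, v i] in direction i and [v j, v j + 1] for j <> i.
   This encoding is a bijection onto the set of faces. *)
Definition face (d : nat) : Type := ({ffun 'I_d -> int} * 'I_d)%type.

Definition face_set (R : realType) (d : nat) (Q : face d) : set ('I_d -> R) :=
  @cube_set R d (fun j => Q.1 j) (fun j => j != Q.2).

Definition adjacent (R : realType) (d : nat) (Q Q' : face d) : Prop :=
  @is_elem_cube R d (d - 2) (@face_set R d Q `&` @face_set R d Q').

Definition Q0 (d : nat) (hd : (0 < d)%N) : face d := ([ffun => 0%R], Ordinal hd).

Definition cluster (R : realType) (d : nat) (w : face d -> bool) (Q : face d)
  : set (face d) :=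
  [set Q' | exists (n : nat) (g : nat -> face d),
      [/\ g 0%N = Q, g n = Q',
          (forall k, (k <= n)%N -> w (g k)) &
          (forall k, (k < n)%N -> @adjacent R d (g k) (g k.+1))]].

(* omega : face d -> T -> bool is a random configuration on a probability space
   (T, P) whose law is the product measure P_p: the events {face Q is open}
   are measurable, have probability p, and are mutually independent. *)
Definition face_percolation (R : realType) (d : nat) (dT : measure_display)
  (T : measurableType dT) (P : probability T R) (p : R)
  (omega : face d -> T -> bool) : Prop :=
  [/\ (forall Q, measurable [set t | omega Q t]),
      (forall Q, P [set t | omega Q t] = p%:E) &
      (forall s : seq (face d), uniq s ->
         P (\bigcap_(Q in [set` s]) [set t | omega Q t]) = (p ^+ size s)%:E)].

Definition infinite_cluster_event (R : realType) (d : nat) (hd : (0 < d)%N)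
  (T : Type) (omega : face d -> T -> bool) : set T :=
  [set t | infinite_set (@cluster R d (fun Q => omega Q t) (Q0 hd))].

From Pilot Require Import Defs.
From HB Require Import structures.
From mathcomp Require Import all_boot all_order all_algebra.
From mathcomp Require Import all_classical all_reals all_analysis.
From mathcomp Require Import zify ring.

(* If the open cluster of Q0 is infinite then, for every n, it contains a
   self-avoiding open walk of n steps from Q0: a shortest open walk to a face
   beyond the finitely many faces within n steps of Q0.  Each of the 2(d-1)
   (d-2)-dimensional cubes in the boundary of a face lies in exactly three
   other faces, so a face has at most 6(d-1) adjacent faces; since a walk never
   steps back to a visited face, there are at most 6(d-1) (6d-7)^(n-1) such
   walks, each open with probability p^(n+1).  Hence
   theta(p) <= 6(d-1) p^2 ((6d-7) p)^(n-1) for all n, which tends to 0 when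
   (6d-7) p < 1. *)

Set Implicit Arguments. Unset Strict Implicit. Unset Printing Implicit Defensive.
Import Order.TTheory GRing.Theory Num.Theory numFieldNormedType.Exports.
Local Open Scope classical_set_scope.

Lemma size_flatten_map_le (T : eqType) (U : Type) (f : T -> seq U) s c :
  {in s, forall x, size (f x) <= c} -> size (flatten (map f s)) <= c * size s.
Proof.
elim: s => [|x s IH] fs //=; rewrite size_cat mulnS leq_add ?fs ?mem_head //.
by apply: IH => y ys; apply: fs; rewrite inE ys orbT.
Qed.

Section Walks.
Variables (S : eqType) (adj : S -> S -> Prop).

Definition walk (g : nat -> S) (n : nat) : Prop :=
  forall k, k < n -> adj (g k) (g k.+1).

(* [Defs.cluster R w Q] unfolds to [open_cluster (Defs.adjacent R) w Q]. *)
Definition open_cluster (w : S -> bool) (x0 : S) : set S :=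
  [set y | exists (n : nat) (g : nat -> S),
     [/\ g 0 = x0, g n = y, (forall k, k <= n -> w (g k)) & walk g n]].

Lemma walk_le g m n : n <= m -> walk g m -> walk g n.
Proof. by move=> nm gm k kn; apply: gm; apply: leq_trans nm. Qed.

Lemma uniq_mkseq_le (g : nat -> S) m n : n <= m ->
  uniq (mkseq g m) -> uniq (mkseq g n).
Proof. by move=> nm; rewrite /mkseq -(subnKC nm) iotaD map_cat cat_uniq => /andP[]. Qed.

Lemma walk_splice (w : S -> bool) g m a b : a < b -> b <= m -> g a = g b ->
  (forall k, k <= m -> w (g k)) -> walk g m ->
  exists h : nat -> S, [/\ h 0 = g 0, h (m - (b - a)) = g m,
      forall k, k <= m - (b - a) -> w (h k) & walk h (m - (b - a))].
Proof.
move=> ab bm gab wg ag.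
exists (fun k => if k <= a then g k else g (k + (b - a))); split.
- by rewrite leq0n.
- case: leqP => [mba|_]; last by rewrite subnK // (leq_trans (leq_subr _ _)).
  have -> : m - (b - a) = a by lia.
  by rewrite gab; congr g; lia.
- by move=> k km; case: leqP => _; apply: wg; lia.
- move=> k km; case: (leqP k.+1 a) => [ka|ak].
  + by rewrite ltnW //; apply: ag; lia.
  + case: leqP => [ka|_]; last by rewrite addSn; apply: ag; lia.
    have -> : k = a by lia.
    by rewrite gab addSn (subnKC (ltnW ab)); apply: ag; lia.
Qed.

Lemma open_cluster_uniq_walk (w : S -> bool) x0 y : open_cluster w x0 y ->
  exists m (g : nat -> S), [/\ g 0 = x0, g m = y,
    (forall k, k <= m -> w (g k)), walk g m & uniq (mkseq g m.+1)].
Proof.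
move=> cy.
pose reaches m := `[< exists g : nat -> S, [/\ g 0 = x0, g m = y,
   (forall k, k <= m -> w (g k)) & walk g m] >].
have ex_m : exists m, reaches m.
  by case: cy => m [g gm]; exists m; apply/asboolP; exists g.
case: (ex_minnP ex_m) => m /asboolP [g [g0 gm wg ag]] m_min.
exists m, g; split => //; apply: contraT => /(uniqPn y) [a [b [ab]]].
rewrite size_mkseq ltnS => bm; rewrite !nth_mkseq ?(ltn_trans ab) // => gab.
have [h [h0 hm hw ha]] := walk_splice ab bm gab wg ag.
have : reaches (m - (b - a)) by apply/asboolP; exists h; rewrite h0 hm.
by move/m_min; lia.
Qed.

Variable nbrs : S -> seq S.
Hypothesis adj_mem_nbrs : forall x y, adj x y -> y \in nbrs x.

Fixpoint reach (x0 : S) (n : nat) : seq S :=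
  if n is n'.+1 then reach x0 n' ++ flatten [seq nbrs x | x <- reach x0 n']
  else [:: x0].

Lemma reach_le x0 m n : m <= n -> {subset reach x0 m <= reach x0 n}.
Proof.
elim: n => [|n IH]; first by rewrite leqn0 => /eqP ->.
rewrite leq_eqVlt ltnS => /orP[/eqP -> // | /IH sub x /sub xn].
by rewrite /= mem_cat xn.
Qed.

Lemma walk_end_reach g m : walk g m -> g m \in reach (g 0) m.
Proof.
elim: m => [|m IH] gm; first exact: mem_head.
rewrite /= mem_cat; apply/orP; right; apply/flatten_mapP; exists (g m).
- by apply: IH; apply: walk_le gm.
- exact/adj_mem_nbrs/gm.
Qed.

Lemma infinite_open_cluster_walk (w : S -> bool) x0 n : infinite_set (open_cluster w x0) ->
  exists g : nat -> S, [/\ g 0 = x0, walk g n,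
    (forall k, k <= n -> w (g k)) & uniq (mkseq g n.+1)].
Proof.
move=> inf.
have [y [cy yNr]] : exists y, open_cluster w x0 y /\ y \notin reach x0 n.
  apply: contrapT => none; apply: inf.
  apply: (sub_finite_set _ (finite_seq (reach x0 n))) => y cy /=.
  by apply/negPn/negP => yNr; apply: none; exists y.
have [m [g [g0 gm wg ag ug]]] := open_cluster_uniq_walk cy.
have nm : n <= m.
  rewrite leqNgt; apply/negP => mn; move/negP: yNr; apply.
  by rewrite -gm -g0; apply: (reach_le (ltnW mn)); apply: walk_end_reach.
exists g; split => //; first exact: walk_le ag.
- by move=> k kn; apply: wg; apply: leq_trans nm.
- exact: uniq_mkseq_le ug.
Qed.

(* [saws x0 n] lists the self-avoiding [adj]-walks of [n] steps from [x0], each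
   as the sequence of its sites; [nbrs] supplies the candidates for each step. *)
Definition extend (x0 : S) (s : seq S) : seq (seq S) :=
  [seq rcons s y | y <- nbrs (last x0 s) & `[< adj (last x0 s) y >] && (y \notin s)].

Fixpoint saws (x0 : S) (n : nat) : seq (seq S) :=
  if n is n'.+1 then flatten [seq extend x0 s | s <- saws x0 n'] else [:: [:: x0]].

Lemma saws_spec x0 n s : s \in saws x0 n ->
  [/\ size s = n.+1, uniq s, nth x0 s 0 = x0 & walk (nth x0 s) n].
Proof.
elim: n s => [|n IH] s /=; first by rewrite inE => /eqP ->; split => // k.
case/flatten_mapP => s' /IH [sz us s0 ws] /mapP [y].
rewrite mem_filter => /andP [/andP [/asboolP adj_y yNs] _] ->.
split.
- by rewrite size_rcons sz.
- by rewrite rcons_uniq yNs us.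
- by rewrite nth_rcons sz.
- move=> k kn; rewrite !nth_rcons sz kn ltnS.
  case: (ltnP k n) => [kn' | nk]; first exact: ws.
  have -> : k = n by lia.
  by rewrite eqxx; rewrite -[last _ _]nth_last sz in adj_y.
Qed.

Lemma mkseq_mem_saws x0 g n : g 0 = x0 -> walk g n -> uniq (mkseq g n.+1) ->
  mkseq g n.+1 \in saws x0 n.
Proof.
move=> g0; elim: n => [|n IH] gn un; first by rewrite -g0 mem_seq1.
apply/flatten_mapP; exists (mkseq g n.+1).
  by apply: IH; [apply: walk_le gn | apply: uniq_mkseq_le un].
have last_g : last x0 (mkseq g n.+1) = g n by rewrite mkseqS last_rcons.
move: un; rewrite mkseqS rcons_uniq => /andP [gNs _].
apply/mapP; exists (g n.+1) => //; rewrite mem_filter last_g gNs andbT.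
by rewrite adj_mem_nbrs ?andbT; [apply/asboolP | ]; apply: gn.
Qed.

Lemma saws_sub_open_cluster (w : S -> bool) x0 n s : s \in saws x0 n ->
  (forall x, x \in s -> w x) -> forall y, y \in s -> open_cluster w x0 y.
Proof.
move=> /saws_spec [sz _ s0 ws] ow y ys.
have iy : index y s <= n by rewrite -ltnS -sz index_mem.
exists (index y s), (nth x0 s); split => //.
- exact: nth_index.
- by move=> k kn; apply/ow/mem_nth; rewrite sz ltnS (leq_trans kn).
- exact: walk_le ws.
Qed.

Variable deg : nat.
Hypotheses (adj_sym : forall x y, adj x y -> adj y x)
  (mem_nbrs_self : forall x, x \in nbrs x)
  (size_nbrs : forall x, size (nbrs x) <= deg.+1).

Lemma size_extend x0 s :
  size (extend x0 s) + count (mem s) (nbrs (last x0 s)) <= size (nbrs (last x0 s)).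
Proof.
rewrite size_map size_filter -(count_predC (mem s)) addnC leq_add2l.
by apply: sub_count => y /andP[].
Qed.

Lemma size_extend_saws x0 n s : s \in saws x0 n ->
  size (extend x0 s) <= deg - (n != 0).
Proof.
move=> /saws_spec [sz us _ ws].
set z := last x0 s.
have z_nth : z = nth x0 s n by rewrite /z -nth_last sz.
have z_s : z \in s by rewrite z_nth mem_nth // sz.
(* [z] and, after the first step, its predecessor are visited sites in [nbrs z]. *)
suff : (n != 0).+1 <= count (mem s) (nbrs z).
  by have := size_extend x0 s; have := size_nbrs z; rewrite -/z; lia.
case: n sz z_nth ws => [|n] sz z_nth ws /=.
  by rewrite -has_count; apply/hasP; exists z.
set y := nth x0 s n.
have zy : uniq [:: z; y] by rewrite /= inE andbT z_nth nth_uniq ?sz //; lia.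
have sub : {subset [:: z; y] <= [seq x <- nbrs z | x \in s]}.
  move=> x; rewrite !inE mem_filter => /orP[] /eqP ->; apply/andP; split => //.
  - by rewrite /y mem_nth // sz ltnW.
  - by rewrite z_nth; apply/adj_mem_nbrs/adj_sym/ws.
by have := uniq_leq_size zy sub; rewrite size_filter.
Qed.

Lemma size_saws x0 n : size (saws x0 n.+1) <= deg * deg.-1 ^ n.
Proof.
have step m : size (saws x0 m.+1) <= (deg - (m != 0)) * size (saws x0 m).
  apply: size_flatten_map_le => s; exact: size_extend_saws.
elim: n => [|n IH]; first by rewrite muln1 (leq_trans (step 0)) ?subn0 ?muln1.
by rewrite (leq_trans (step _)) // subn1 expnS mulnCA leq_mul2l IH orbT.
Qed.

End Walks.

Local Open Scope ring_scope.

Section Percolation.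
Variables (S : choiceType) (adj : S -> S -> Prop) (nbrs : S -> seq S).
Hypothesis adj_mem_nbrs : forall x y, adj x y -> y \in nbrs x.
Variables (R : realType) (dT : measure_display) (T : measurableType dT).
Variables (P : probability T R) (p : R) (omega : S -> T -> bool).
Hypothesis open_measurable : forall x, measurable [set t | omega x t].
Hypothesis open_indep : forall s : seq S, uniq s ->
  P (\bigcap_(x in [set` s]) [set t | omega x t]) = (p ^+ size s)%:E.
Variable x0 : S.

Let open_event (s : seq S) := \bigcap_(x in [set` s]) [set t | omega x t].
Let saws_event n := \bigcup_(s in [set` saws adj nbrs x0 n]) open_event s.
Let infinite_event := [set t | infinite_set (open_cluster adj (omega^~ t) x0)].

Lemma infinite_event_bigcap : infinite_event = \bigcap_n saws_event n.
Proof.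
apply/seteqP; split => t.
- move=> inf n _.
  have [g [g0 gn og ug]] := infinite_open_cluster_walk adj_mem_nbrs n inf.
  exists (mkseq g n.+1); first exact: mkseq_mem_saws.
  by move=> y /mapP [k]; rewrite mem_iota => /andP [_ kn] ->; apply: og.
- move=> all_n /finite_seqP [s cs].
  have [u un ou] := all_n (size s) I.
  have [sz uu _ _] := saws_spec un.
  have sub : {subset u <= s}.
    move=> y yu; suff : open_cluster adj (omega^~ t) x0 y by rewrite cs.
    exact: (saws_sub_open_cluster un).
  by have := uniq_leq_size uu sub; rewrite sz ltnn.
Qed.

Lemma infinite_cluster_prob_le n :
  (P infinite_event <= ((size (saws adj nbrs x0 n))%:R * p ^+ n.+1)%:E)%E.
Proof.
have event_measurable s : measurable (open_event s).
  by apply: fin_bigcap_measurable; [exact: finite_seq | move=> x _; exact: open_measurable].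
have saws_eventE m : saws_event m = \big[setU/set0]_(i < size (saws adj nbrs x0 m))
    open_event (nth [::] (saws adj nbrs x0 m) i).
  by rewrite /saws_event bigcup_seq (big_nth [::]) big_mkord.
have inf_measurable : measurable infinite_event.
  rewrite infinite_event_bigcap; apply: bigcapT_measurable => m.
  by rewrite saws_eventE; apply: bigsetU_measurable => i _.
apply: (@le_trans _ _ (P (saws_event n))).
  apply: le_measure; rewrite ?inE //; first by rewrite saws_eventE; apply: bigsetU_measurable.
  by rewrite infinite_event_bigcap => t /(_ n I).
rewrite saws_eventE; apply: le_trans (Boole_inequality _ (fun i _ => event_measurable _)) _.
rewrite (eq_bigr (fun _ => (p ^+ n.+1)%:E)); last first.
  move=> i _; have [sz us _ _] := saws_spec (mem_nth [::] (ltn_ord i)).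
  by rewrite -sz; apply: open_indep.
by rewrite sumEFin big_const_ord iter_addr addr0 mulr_natl.
Qed.

End Percolation.

Lemma geometric_majorant_le0 (R : realType) (x : \bar R) (a z : R) : `|z| < 1 ->
  (forall n, x <= (a * z ^+ n)%:E)%E -> (x <= 0)%E.
Proof.
move=> z1; case: x => [r | | ] // xb; last by have := xb 0%N.
rewrite lee_fin; apply: (ler_cvg_to (cvg_cst r) (cvg_geometric a z1)).
by apply: nearW => n; have := xb n; rewrite lee_fin.
Qed.

Definition translate d (v : {ffun 'I_d -> int}) (k : 'I_d) (a : int) : {ffun 'I_d -> int} :=
  [ffun j => v j + (if j == k then a else 0)].

Lemma translate0 d (v : {ffun 'I_d -> int}) k : translate v k 0 = v.
Proof. by apply/ffunP => j; rewrite ffunE if_same addr0. Qed.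

Lemma translate_agree d (v v' : {ffun 'I_d -> int}) i k : i != k ->
  (forall j, j != i -> j != k -> v' j = v j) ->
  v' = translate (translate v i (v' i - v i)) k (v' k - v k).
Proof.
move=> ik agree; apply/ffunP => j; rewrite !ffunE.
have [->|ji] := eqVneq j i; first by rewrite (negbTE ik); ring.
have [->|jk] := eqVneq j k; first ring.
by rewrite agree //; ring.
Qed.

Definition face_contains d (Q : face d) (a : 'I_d -> int) : Prop :=
  forall j, Q.1 j <= a j <= Q.1 j + (j != Q.2 : nat)%:Z.

Lemma cube_set_int R d l b (a : 'I_d -> int) :
  @cube_set R d l b (fun j => (a j)%:~R) <-> forall j, l j <= a j <= l j + (b j : nat)%:Z.
Proof. by split => h j; have := h j; rewrite !ler_int. Qed.

Lemma cube_sub_face R d (l : 'I_d -> int) b (Q : face d) :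
  @cube_set R d l b `<=` @face_set R d Q ->
  face_contains Q l /\ forall j, b j -> j != Q.2 /\ l j = Q.1 j.
Proof.
move=> sub.
have in_face a : (forall j, l j <= a j <= l j + (b j : nat)%:Z) -> face_contains Q a.
  by move=> la; apply/(cube_set_int R)/sub/(cube_set_int R).
have lQ : face_contains Q l by apply: in_face => j; case: (b j) => /=; lia.
split => // j bj.
have lj : face_contains Q (fun m => l m + ((m == j) : nat)%:Z).
  by apply: in_face => m; have [->|_] := eqVneq m j; rewrite ?bj /=; case: (b m) => /=; lia.
have := lj j; have := lQ j; rewrite eqxx /=.
by case: (j != Q.2) => /= h1 h2; [split => //; lia | exfalso; lia].
Qed.

(* The six faces other than [Q] that contain one of the two (d-2)-faces of [Q]
   normal to [k]: two parallel to [Q] and four perpendicular to it. *)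
Definition nbrs_across d (Q : face d) (k : 'I_d) : seq (face d) :=
  [:: (translate Q.1 k 1, Q.2); (translate Q.1 k (-1), Q.2);
      (Q.1, k); (translate Q.1 k 1, k);
      (translate Q.1 Q.2 (-1), k); (translate (translate Q.1 Q.2 (-1)) k 1, k)].

(* [Q] itself is listed because [mem_face_nbrs] does not exclude [Q' = Q]. *)
Definition face_nbrs d (Q : face d) : seq (face d) :=
  Q :: flatten [seq nbrs_across Q k | k <- enum (predC1 Q.2)].

Lemma size_face_nbrs d (Q : face d) : (size (face_nbrs Q) <= (6 * d.-1).+1)%N.
Proof.
have -> : d.-1 = size (enum (predC1 Q.2)) by rewrite -cardE cardC1 card_ord.
exact: size_flatten_map_le.
Qed.

Lemma mem_face_nbrs d (Q Q' : face d) (a : 'I_d -> int) k :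
  k != Q.2 -> Q'.2 \in [:: Q.2; k] ->
  (forall j, j != Q.2 -> j != k -> Q'.1 j = Q.1 j) ->
  face_contains Q a -> face_contains Q' a -> Q' \in face_nbrs Q.
Proof.
case: Q Q' => [v i] [v' i'] /= ki i'_ik agree aQ aQ'.
have across F : F \in nbrs_across (v, i) k -> F \in face_nbrs (v, i).
  move=> F_k; rewrite inE; apply/orP; right; apply/flatten_mapP.
  by exists k; rewrite // mem_enum.
have ik : i != k by rewrite eq_sym.
rewrite (translate_agree ik agree).
have := aQ i; have := aQ k; rewrite eqxx (negbTE ki) /=.
rewrite !inE in i'_ik; case/orP: i'_ik aQ' => /eqP -> aQ'.
all: have := aQ' i; have := aQ' k; rewrite eqxx ?(negbTE ki) ?(negbTE ik) /=.
all: move=> /andP[? ?] /andP[? ?] /andP[? ?] /andP[? ?].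
- have -> : v' i - v i = 0 by lia.
  rewrite translate0.
  have : v' k - v k = 1 \/ v' k - v k = -1 \/ v' k - v k = 0 by lia.
  case=> [->|[->|->]]; last by rewrite translate0 mem_head.
  1,2: by apply: across; rewrite !inE /= eqxx ?orTb ?orbT.
- have : v' i - v i = 0 \/ v' i - v i = -1 by lia.
  have : v' k - v k = 0 \/ v' k - v k = 1 by lia.
  by case=> -> [] ->; rewrite ?translate0; apply: across; rewrite !inE /= eqxx ?orTb ?orbT.
Qed.

Lemma adjacent_sym (R : realType) d (Q Q' : face d) :
  Defs.adjacent R Q Q' -> Defs.adjacent R Q' Q.
Proof. by rewrite /Defs.adjacent setIC. Qed.

Lemma adjacent_mem_face_nbrs (R : realType) d (Q Q' : face d) : (2 <= d)%N ->
  Defs.adjacent R Q Q' -> Q' \in face_nbrs Q.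
Proof.
move=> d2 [l [b [card_b QQ']]].
have [lQ bQ] : face_contains Q l /\ forall j, b j -> j != Q.2 /\ l j = Q.1 j.
  by apply: (@cube_sub_face R); rewrite -QQ'; apply: subIsetl.
have [lQ' bQ'] : face_contains Q' l /\ forall j, b j -> j != Q'.2 /\ l j = Q'.1 j.
  by apply: (@cube_sub_face R); rewrite -QQ'; apply: subIsetr.
pose D := [set j | ~~ b j]%SET.
have card_D : #|D| = 2%N.
  have := cardC [pred j | b j]; rewrite card_b card_ord.
  have -> : #|[predC [pred j | b j]]| = #|D|.
    by apply/eq_card => j; rewrite /D !inE.
  lia.
have QD : Q.2 \in D by rewrite inE; apply/negP => /bQ [/eqP].
have Q'D : Q'.2 \in D by rewrite inE; apply/negP => /bQ' [/eqP].
have [k [kQ Dk]] : exists k, k != Q.2 /\ D = [set Q.2; k]%SET.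
  move/eqP/cards2P: card_D QD => [x [y [xy ->]]]; rewrite !inE => /orP[] /eqP ->.
  - by exists y; rewrite eq_sym.
  - by exists x; rewrite finset.setUC.
apply: (mem_face_nbrs kQ _ _ lQ lQ').
- by move: Q'D; rewrite Dk !inE.
- move=> j jQ jk; have : j \notin D by rewrite Dk !inE negb_or jQ jk.
  rewrite inE negbK => bj.
  by have [_ <-] := bQ j bj; have [_ <-] := bQ' j bj.
Qed.

Section FacePercolation.
Variables (d : nat) (hd : (2 <= d)%N) (R : realType) (dT : measure_display).
Variables (T : measurableType dT) (P : probability T R) (p : R).
Variable omega : face d -> T -> bool.
Hypothesis perc : face_percolation P p omega.

Lemma face_percolation_ge0 : 0 <= p.
Proof.
case: perc => _ /(_ (Q0 (ltnW hd))) prob _.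
by rewrite -lee_fin -prob measure_ge0.
Qed.

Lemma face_infinite_cluster_prob_le n :
  (P (infinite_cluster_event R (ltnW hd) omega) <=
     ((6 * d.-1)%:R * p ^+ 2 * (((6 * d)%:R - 7) * p) ^+ n)%:E)%E.
Proof.
case: perc => open_meas _ open_indep.
have adj_nbrs := @adjacent_mem_face_nbrs R d _ _ hd.
apply: le_trans (infinite_cluster_prob_le adj_nbrs open_meas open_indep _ n.+1) _.
have size_le := size_saws adj_nbrs (@adjacent_sym R d) (fun Q => mem_head Q _)
  (@size_face_nbrs d) (Q0 (ltnW hd)) n.
have -> : (6 * d)%:R - 7 = (6 * d.-1).-1%:R :> R by rewrite -natrB; [congr _%:R | ]; lia.
rewrite lee_fin (_ : _ * _ * _ = (6 * d.-1 * (6 * d.-1).-1 ^ n)%:R * p ^+ n.+2).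
  by rewrite ler_wpM2r ?exprn_ge0 ?face_percolation_ge0 // ler_nat size_le.
by rewrite !natrM natrX exprMn !exprS; ring.
Qed.

End FacePercolation.

Theorem proposition2p9 (d : nat) (hd : (2 <= d)%N) (R : realType)
  (dT : measure_display) (T : measurableType dT) (P : probability T R) (p : R)
  (omega : face d -> T -> bool) :
  face_percolation P p omega ->
  (0 < P (infinite_cluster_event R (ltnW hd) omega))%E ->
  1 / ((6 * d)%:R - 7) <= p.
Proof.
move=> perc inf_pos; rewrite leNgt; apply/negP => p_small.
have c_gt0 : 0 < (6 * d)%:R - 7 :> R by rewrite -natrB ?ltr0n; lia.
have cp_lt1 : `|((6 * d)%:R - 7) * p| < 1.
  rewrite ger0_norm; last exact: mulr_ge0 (ltW c_gt0) (face_percolation_ge0 hd perc).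
  by rewrite mulrC -ltr_pdivlMr.
have := geometric_majorant_le0 cp_lt1 (face_infinite_cluster_prob_le hd perc).
by rewrite leNgt inf_pos.
Qed.
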